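(* Let $\lambda_1,\lambda_2>0$, $\nu\in(0,1)$ and set $c_\nu:=\nu^{\nu/(1-\nu)}-\nu^{1/(1-\nu)}$. Define $$I^{(1)}_{\mathrm{MD}}(x):=\begin{cases}c_\nu\left(\frac{x}{\lambda_1}\right)^{1/(1-\nu)} & x\geq0,\\ c_\nu\left(\frac{x}{-\lambda_2}\right)^{1/(1-\nu)} & x<0,\end{cases}$$ and define $I^{(2)}_{\mathrm{MD},\underline{\lambda}}$ as follows: if $\lambda_1=\lambda_2=\lambda$, $I^{(2)}_{\mathrm{MD},\underline{\lambda}}(x):=((\nu/2)^{\nu/(2-\nu)}-(\nu/2)^{2/(2-\nu)})\left(\frac{x^2}{\lambda}\right)^{1/(2-\nu)}$ for all $x\in\mathbb{R}$; if $\lambda_1>\lambda_2$, $I^{(2)}_{\mathrm{MD},\underline{\lambda}}(x):=c_\nu\left(\frac{x}{\lambda_1-\lambda_2}\right)^{1/(1-\nu)}$ for $x\geq0$ and $:=\infty$ for $x<0$; if $\lambda_1<\lambda_2$, $I^{(2)}_{\mathrm{MD},\underline{\lambda}}(x):=c_\nu\left(\frac{x}{-(\lambda_2-\lambda_1)}\right)^{1/(1-\nu)}$ for $x\leq0$ and $:=\infty$ for $x>0$. Then $I^{(1)}_{\mathrm{MD}}(0)=I^{(2)}_{\mathrm{MD},\underline{\lambda}}(0)=0$, and for $x\neq0$: (1) if $\lambda_1\neq\lambda_2$, then $I^{(2)}_{\mathrm{MD},\underline{\lambda}}(x)>I^{(1)}_{\mathrm{MD}}(x)>0$; (2) if $\lambda_1=\lambda_2=\lambda$,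 there exists $\delta_{\nu,\lambda}>0$ such that $I^{(2)}_{\mathrm{MD},\underline{\lambda}}(x)>I^{(1)}_{\mathrm{MD}}(x)>0$ if $0<|x|<\delta_{\nu,\lambda}$, $I^{(1)}_{\mathrm{MD}}(x)>I^{(2)}_{\mathrm{MD},\underline{\lambda}}(x)>0$ if $|x|>\delta_{\nu,\lambda}$, and $I^{(2)}_{\mathrm{MD},\underline{\lambda}}(x)=I^{(1)}_{\mathrm{MD}}(x)>0$ if $|x|=\delta_{\nu,\lambda}$.
   Context: In the paper these are the moderate deviation rate functions for the fractional Skellam processes of type 1 and type 2 respectively; the claim concerns only the explicitly defined functions above. *)

From mathcomp Require Import all_boot all_order all_algebra.
From mathcomp Require Import all_classical all_reals all_analysis.
Set Implicit Arguments. Unset Strict Implicit. Unset Printing Implicit Defensive.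
Import Order.TTheory GRing.Theory Num.Theory.
Local Open Scope ring_scope.

Definition c_nu {R : realType} (nu : R) : R :=
  nu `^ (nu / (1 - nu)) - nu `^ (1 / (1 - nu)).

Definition I1_MD {R : realType} (l1 l2 nu : R) (x : R) : R :=
  if 0 <= x then c_nu nu * (x / l1) `^ (1 / (1 - nu))
  else c_nu nu * (x / (- l2)) `^ (1 / (1 - nu)).

Definition I2_MD {R : realType} (l1 l2 nu : R) (x : R) : \bar R :=
  if l1 == l2 then
    (((nu / 2) `^ (nu / (2 - nu)) - (nu / 2) `^ (2 / (2 - nu)))
       * (x ^+ 2 / l1) `^ (1 / (2 - nu)))%:E
  else if l2 < l1 then
    (if 0 <= x then (c_nu nu * (x / (l1 - l2)) `^ (1 / (1 - nu)))%:E
     else +oo%E)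
  else
    (if x <= 0 then (c_nu nu * (x / (- (l2 - l1))) `^ (1 / (1 - nu)))%:E
     else +oo%E).

From mathcomp Require Import all_boot all_order all_algebra.
From mathcomp Require Import all_classical all_reals all_analysis.
From mathcomp Require Import ring lra.
Import Order.TTheory GRing.Theory Num.Theory.
Local Open Scope ring_scope.

(* For distinct intensities, on the side where I2 is finite it is the type-1
   rate with the scale l1 (or l2) replaced by the smaller |l1 - l2|, and the
   rate decreases in the scale.  For equal intensities both rates are monomials
   in |x|, of degrees 1/(1-nu) for I1 and 2/(2-nu) < 1/(1-nu) for I2; two such
   monomials with positive coefficients cross exactly once on (0, +oo), and the
   lower-degree one dominates before the crossing. *)

Section PowerMonomials.
Context {R : realType}.

Lemma gtr_powR (a : R) : 0 < a < 1 -> {homo powR a : x y /~ y < x}.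
Proof.
move=> /andP[a0 a1] x y xy; rewrite /powR gt_eqF // ltr_expR.
have lna : ln a < 0 by apply: ln_lt0; rewrite a0 a1.
nra.
Qed.

Lemma powR_crossing (a b r s : R) : 0 < a -> 0 < b -> r < s ->
  exists2 delta : R, 0 < delta & forall t, 0 < t ->
    [/\ t < delta -> a * t `^ s < b * t `^ r,
        delta < t -> b * t `^ r < a * t `^ s
      & t = delta -> a * t `^ s = b * t `^ r].
Proof.
move=> a0 b0 rs; set M := (ln b - ln a) / (s - r).
exists (expR M) => [|t t0]; first exact: expR_gt0.
have sr0 : 0 < s - r by rewrite subr_gt0.
have at0 : 0 < a * t `^ s by rewrite mulr_gt0 ?powR_gt0.
have bt0 : 0 < b * t `^ r by rewrite mulr_gt0 ?powR_gt0.
have ln_gap : ln (b * t `^ r) - ln (a * t `^ s) = (s - r) * (M - ln t).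
  rewrite !lnM ?posrE ?powR_gt0 // !ln_powR /M; field.
  by rewrite gt_eqF.
have ltr_lnE u v : 0 < u -> 0 < v -> (u < v) = (0 < ln v - ln u).
  by move=> u0 v0; rewrite subr_gt0 ltr_ln.
split=> [tM|Mt|tM].
- by rewrite ltr_lnE // ln_gap pmulr_rgt0 // subr_gt0 -(expRK M) ltr_ln ?posrE ?expR_gt0.
- rewrite ltr_lnE // -oppr_lt0 opprB ln_gap pmulr_rlt0 // subr_lt0.
  by rewrite -(expRK M) ltr_ln ?posrE ?expR_gt0.
- apply: ln_inj; rewrite ?posrE //; apply/eqP; rewrite eq_sym -subr_eq0.
  by rewrite ln_gap tM expRK subrr mulr0.
Qed.

End PowerMonomials.

Lemma c_nu_gt0 {R : realType} (nu : R) : 0 < nu < 1 -> 0 < c_nu nu.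
Proof.
move=> nu01; have /andP[_ nu_lt1] := nu01.
rewrite /c_nu subr_gt0; apply: gtr_powR => //.
by rewrite ltr_pM2r ?invr_gt0 ?subr_gt0.
Qed.

Section Rates.
Context {R : realType} (nu : R).
Hypotheses (nu_gt0 : 0 < nu) (nu_lt1 : nu < 1).

Let c_nu_pos : 0 < c_nu nu.
Proof. by rewrite c_nu_gt0 // nu_gt0. Qed.

Let nu_lt2 : nu < 2.
Proof. by rewrite (lt_trans nu_lt1) // ltr1n. Qed.

Definition md_rate (l t : R) : R := c_nu nu * (t / l) `^ (1 / (1 - nu)).

Lemma md_rate0 (l : R) : md_rate l 0 = 0.
Proof. by rewrite /md_rate mul0r powR0 ?mulr0 // gt_eqF // divr_gt0 ?subr_gt0. Qed.

Lemma md_rate_gt0 (l t : R) : 0 < l -> 0 < t -> 0 < md_rate l t.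
Proof. by move=> l0 t0; rewrite mulr_gt0 ?powR_gt0 ?divr_gt0. Qed.

Lemma md_rate_decr (l l' t : R) :
  0 < l -> l < l' -> 0 < t -> md_rate l' t < md_rate l t.
Proof.
move=> l0 ll' t0; rewrite ltr_pM2l //.
apply: gt0_ltr_powR; rewrite ?divr_gt0 ?subr_gt0 // ?nnegrE ?divr_ge0 ?ltW //.
  exact: lt_trans ll'.
by rewrite ltr_pM2l // ltf_pV2 ?posrE // (lt_trans l0).
Qed.

Lemma md_rate_monomial (l t : R) : 0 < l -> 0 <= t ->
  md_rate l t = c_nu nu * l^-1 `^ (1 / (1 - nu)) * t `^ (1 / (1 - nu)).
Proof.
move=> l0 t0; rewrite /md_rate powRM //; last by rewrite invr_ge0 ltW.
by rewrite mulrA mulrAC.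
Qed.

Lemma c_nu_half :
  c_nu (nu / 2) = (nu / 2) `^ (nu / (2 - nu)) - (nu / 2) `^ (2 / (2 - nu)).
Proof.
by rewrite /c_nu; congr (_ `^ _ - _ `^ _); field; rewrite gt_eqF ?subr_gt0.
Qed.

Section Intensities.
Context (l1 l2 : R).
Hypotheses (l1_gt0 : 0 < l1) (l2_gt0 : 0 < l2).

Lemma I1_MD_ge0 (x : R) : 0 <= x -> I1_MD l1 l2 nu x = md_rate l1 x.
Proof. by move=> x0; rewrite /I1_MD x0. Qed.

Lemma I1_MD_lt0 (x : R) : x < 0 -> I1_MD l1 l2 nu x = md_rate l2 (- x).
Proof. by move=> x0; rewrite /I1_MD leNgt x0 /md_rate invrN mulrN mulNr. Qed.

Lemma I1_MD0 : I1_MD l1 l2 nu 0 = 0.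
Proof. by rewrite I1_MD_ge0 // md_rate0. Qed.

Lemma I1_MD_gt0 (x : R) : x != 0 -> 0 < I1_MD l1 l2 nu x.
Proof.
case: (ltgtP x 0) => // [x0|x0] _.
- by rewrite I1_MD_lt0 // md_rate_gt0 // oppr_gt0.
- by rewrite I1_MD_ge0 ?ltW // md_rate_gt0.
Qed.

Lemma I2_MD_lt21 (x : R) : l2 < l1 ->
  I2_MD l1 l2 nu x = if 0 <= x then (md_rate (l1 - l2) x)%:E else +oo%E.
Proof. by move=> l21; rewrite /I2_MD gt_eqF // l21. Qed.

Lemma I2_MD_lt12 (x : R) : l1 < l2 ->
  I2_MD l1 l2 nu x = if x <= 0 then (md_rate (l2 - l1) (- x))%:E else +oo%E.
Proof.
move=> l12; rewrite /I2_MD lt_eqF // ltNge ltW //=.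
by rewrite /md_rate invrN mulrN mulNr.
Qed.

Lemma I2_MD0 : I2_MD l1 l2 nu 0 = 0%E.
Proof.
case: (ltgtP l1 l2) => [l12|l21|<-].
- by rewrite I2_MD_lt12 // lexx oppr0 md_rate0.
- by rewrite I2_MD_lt21 // lexx md_rate0.
by rewrite /I2_MD eqxx expr0n /= mul0r powR0 ?mulr0 // gt_eqF // divr_gt0 ?subr_gt0.
Qed.

Lemma I1_MD_lt_I2_MD (x : R) : l1 != l2 -> x != 0 ->
  ((I1_MD l1 l2 nu x)%:E < I2_MD l1 l2 nu x)%E.
Proof.
move=> + x0; case: (ltgtP l1 l2) => // [l12|l21] _.
  rewrite I2_MD_lt12 //; case: (ltgtP x 0) x0 => // [xlt0|xgt0] _; last exact: ltry.
  by rewrite I1_MD_lt0 // lte_fin md_rate_decr ?subr_gt0 ?oppr_gt0 // ltrBlDl ltrDr.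
rewrite I2_MD_lt21 //; case: (ltgtP x 0) x0 => // [xlt0|xgt0] _; first exact: ltry.
by rewrite I1_MD_ge0 ?ltW // lte_fin md_rate_decr ?subr_gt0 // ltrBlDl ltrDr.
Qed.

End Intensities.

Section EqualIntensities.
Context (l : R).
Hypothesis l_gt0 : 0 < l.

Lemma I1_MD_diag (x : R) :
  I1_MD l l nu x = c_nu nu * l^-1 `^ (1 / (1 - nu)) * `|x| `^ (1 / (1 - nu)).
Proof.
rewrite -md_rate_monomial //; case: (lerP 0 x) => x0.
  by rewrite I1_MD_ge0 // ger0_norm.
by rewrite I1_MD_lt0 // ltr0_norm.
Qed.

Lemma I2_MD_diag (x : R) : I2_MD l l nu x =
  (c_nu (nu / 2) * l^-1 `^ (1 / (2 - nu)) * `|x| `^ (2 * (1 / (2 - nu))))%:E.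
Proof.
rewrite /I2_MD eqxx c_nu_half [`|x| `^ _]powRrM powR_mulrn // real_normK ?num_real //.
by rewrite [(x ^+ 2 / l) `^ _]powRM ?sqr_ge0 ?invr_ge0 ?ltW // mulrA mulrAC.
Qed.

Let c_half_nu_pos : 0 < c_nu (nu / 2).
Proof.
by rewrite c_nu_gt0 // divr_gt0 //= ltr_pdivrMr // mul1r.
Qed.

Lemma I2_MD_diag_gt0 (x : R) : x != 0 -> (0 < I2_MD l l nu x)%E.
Proof.
by move=> x0; rewrite I2_MD_diag lte_fin !mulr_gt0 ?powR_gt0 ?invr_gt0 ?normr_gt0.
Qed.

Lemma I_MD_diag_crossing : exists2 delta : R, 0 < delta & forall x, x != 0 ->
  [/\ `|x| < delta -> ((I1_MD l l nu x)%:E < I2_MD l l nu x)%E,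
      delta < `|x| -> (I2_MD l l nu x < (I1_MD l l nu x)%:E)%E
    & `|x| = delta -> I2_MD l l nu x = (I1_MD l l nu x)%:E].
Proof.
have degree_lt : 2 * (1 / (2 - nu)) < 1 / (1 - nu).
  rewrite -subr_gt0.
  have -> : 1 / (1 - nu) - 2 * (1 / (2 - nu)) = nu / ((1 - nu) * (2 - nu)).
    by field; rewrite !gt_eqF ?subr_gt0.
  by rewrite divr_gt0 // mulr_gt0 ?subr_gt0.
have coef_gt0 c e : 0 < c -> 0 < c * l^-1 `^ e.
  by move=> c0; rewrite mulr_gt0 ?powR_gt0 ?invr_gt0.
have [delta delta_gt0 cross] := @powR_crossing _ _ _ _ _
  (coef_gt0 _ (1 / (1 - nu)) c_nu_pos) (coef_gt0 _ (1 / (2 - nu)) c_half_nu_pos) degree_lt.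
exists delta => // x x0; rewrite I1_MD_diag I2_MD_diag !lte_fin.
have [|lt gt eq] := cross `|x|; first by rewrite normr_gt0.
by split=> [/lt|/gt|/eq ->].
Qed.

End EqualIntensities.

End Rates.

Theorem proposition5p3 (R : realType) (l1 l2 nu : R) :
  0 < l1 -> 0 < l2 -> 0 < nu < 1 ->
  [/\ I1_MD l1 l2 nu 0 = 0, I2_MD l1 l2 nu 0 = 0%E,
      (l1 != l2 -> forall x : R, x != 0 ->
         ((I1_MD l1 l2 nu x)%:E < I2_MD l1 l2 nu x)%E /\ 0 < I1_MD l1 l2 nu x)
    & (l1 = l2 -> exists2 delta : R, 0 < delta &
         forall x : R, x != 0 ->
           [/\ `|x| < delta ->
                 ((I1_MD l1 l2 nu x)%:E < I2_MD l1 l2 nu x)%E /\ 0 < I1_MD l1 l2 nu x,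
               delta < `|x| ->
                 (I2_MD l1 l2 nu x < (I1_MD l1 l2 nu x)%:E)%E /\ (0 < I2_MD l1 l2 nu x)%E
             & `|x| = delta ->
                 I2_MD l1 l2 nu x = (I1_MD l1 l2 nu x)%:E /\ 0 < I1_MD l1 l2 nu x])].
Proof.
move=> l1_gt0 l2_gt0 /andP[nu_gt0 nu_lt1].
have I1_gt0 x : x != 0 -> 0 < I1_MD l1 l2 nu x by exact: I1_MD_gt0.
split; [exact: I1_MD0 | exact: I2_MD0 | |].
  by move=> l12 x x0; split; [exact: I1_MD_lt_I2_MD | exact: I1_gt0].
move=> l12; subst l2.
have [delta delta_gt0 cross] := I_MD_diag_crossing _ nu_gt0 nu_lt1 _ l1_gt0.
exists delta => // x x0; have [lt gt eq] := cross x x0.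
split=> [/lt|/gt|/eq] cmp; split=> //;
  [exact: I1_gt0 | exact: I2_MD_diag_gt0 | exact: I1_gt0].
Qed.
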